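(* Let $G=(V,E)$ be a finite, connected, undirected graph with $n\ge2$ vertices. For the Moran process $(X_i)_{i\ge0}$ on $G$ with $r=1$, started from $X_0=\{x\}$ with $x$ chosen uniformly at random from $V$, the expected absorption time is at most $n^4\big(\phi(G)^2-\phi'_0\big)$, where $\phi'_0=\frac1n\sum_{x\in V}(\deg x)^{-2}$.
   Context: The Moran process on $G$ with mutant fitness $r>0$ is the Markov chain $(X_i)_{i\ge0}$ whose state $X_i\subseteq V$ is the set of vertices occupied by mutants; every other vertex is occupied by a non-mutant of fitness $1$. Write $W(S)=r|S|+|V\setminus S|$ for the total fitness. Given $X_i=S$, one step is: choose a vertex $x$ with probability $r/W(S)$ if $x\in S$ and $1/W(S)$ if $x\notin S$; then choose a neighbour $y$ of $x$ uniformly at random; set $X_{i+1}=S\cup\{y\}$ if $x\in S$ and $X_{i+1}=S\setminus\{y\}$ if $x\notin S$. The absorption time is $\min\{i: X_i=\emptyset\text{ or }X_i=V\}$. For $X\subseteq V$, $\phi(X)=\sum_{x\in X}\frac{1}{\deg x}$, and $\phi(G)=\phi(V)$. *)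

(* Graph: symmetric irreflexive relation e on a finType T. *)
From HB Require Import structures.
From mathcomp Require Import all_boot all_order all_algebra.
Set Implicit Arguments. Unset Strict Implicit. Unset Printing Implicit Defensive.
Import Order.TTheory GRing.Theory Num.Theory.
Local Open Scope ring_scope.

Section Moran.
Variables (R : realFieldType) (T : finType) (e : rel T).

Definition deg (x : T) : nat := #|[set y | e x y]|.

Definition phi (X : {set T}) : R := \sum_(x in X) (deg x)%:R^-1.

Definition phi0' : R := #|T|%:R^-1 * \sum_(x : T) ((deg x)%:R ^+ 2)^-1.

Definition fitness (r : R) (S : {set T}) : R := r * #|S|%:R + #|~: S|%:R.

(* the state after x reproduces onto neighbour y *)
Definition moran_next (S : {set T}) (x y : T) : {set T} :=
  if x \in S then y |: S else S :\ y.

Definition moran_trans (r : R) (S S' : {set T}) : R :=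
  \sum_(x : T) \sum_(y | e x y)
     ((if x \in S then r else 1) / fitness r S) * (deg x)%:R^-1
       * (moran_next S x y == S')%:R.

Definition absorbing (S : {set T}) : bool := (S == set0) || (S == setT).

Definition init_dist (S : {set T}) : R :=
  \sum_(x : T) #|T|%:R^-1 * (S == [set x])%:R.

(* surv_dist r t S = P(X_t = S and X_0,...,X_t all non-absorbing) *)
Fixpoint surv_dist (r : R) (t : nat) (S' : {set T}) : R :=
  if absorbing S' then 0 else
  match t with
  | 0 => init_dist S'
  | t'.+1 => \sum_(S : {set T}) surv_dist r t' S * moran_trans r S S'
  end.

Definition prob_not_absorbed (r : R) (t : nat) : R :=
  \sum_(S : {set T}) surv_dist r t S.

(* E[tau] = sum_{t>=0} P(tau > t); E[tau] <= B  iff all partial sums <= B *)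
Definition expected_absorption_le (r : R) (B : R) : Prop :=
  forall N : nat, \sum_(t < N) prob_not_absorbed r t <= B.

End Moran.

From Pilot Require Import Defs.
From HB Require Import structures.
From mathcomp Require Import all_boot all_order all_algebra.
From mathcomp Require Import ring lra.
Import Order.TTheory GRing.Theory Num.Theory.
Local Open Scope ring_scope.

(* Write w x = 1/deg x, n = |V| and Phi = phi(V).  The proof is a potential
   (supermartingale) argument with the potential
        h(S) = phi(S) * phi(V \ S),
   which is nonnegative and vanishes on the absorbing states.
   1. When x reproduces onto y, phi changes by the jump (1_S x - 1_S y) w y,
      and h changes by (Phi - 2 phi(S)) * jump - jump^2.
   2. Averaged over one step, the linear term cancels because the step
      weights (1/n) w x w y are symmetric in the edge {x,y} while the jump
      is antisymmetric; a boundary edge of a non-absorbing S contributes a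
      quadratic term at least n^-4.  Hence E[h(X') | X = S] <= h(S) - n^-4.
   3. Summing over the non-absorbed trajectories, the expected potential
      H_t decreases by at least n^-4 P(tau > t) per step, so telescoping gives
      sum_t P(tau > t) <= n^4 H_0, and H_0 = Phi^2/n - phi'_0 is bounded
      by the claimed quantity. *)

Set Implicit Arguments.
Unset Strict Implicit.

Lemma telescoping_bound (R : realDomainType) (F p : nat -> R) (c : R) (N : nat) :
  (forall t, F t.+1 <= F t - c * p t) -> 0 <= F N ->
  c * \sum_(t < N) p t <= F 0.
Proof.
move=> step FN_ge0.
suff : c * \sum_(t < N) p t <= F 0 - F N by lra.
elim: N {FN_ge0} => [|N IH]; first by rewrite big_ord0 mulr0 subrr.
by rewrite big_ord_recr mulrDr /=; have := step N; lra.
Qed.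

Section NeutralMoran.
Variables (R : realFieldType) (T : finType) (e : rel T).

Local Notation n := (#|T|%:R : R).
Local Notation w z := ((deg e z)%:R^-1 : R).
Local Notation phi := (phi R e).
Local Notation Phi := (phi setT).

Lemma phi_ge0 (X : {set T}) : 0 <= phi X.
Proof. by apply: sumr_ge0 => x _; rewrite invr_ge0 ler0n. Qed.

Lemma phi_indicator (X : {set T}) : phi X = \sum_z (z \in X)%:R * w z.
Proof.
rewrite /Defs.phi big_mkcond; apply: eq_bigr => z _.
by case: (z \in X); rewrite ?mul1r ?mul0r.
Qed.

Lemma phi_setC (X : {set T}) : phi (~: X) = Phi - phi X.
Proof. by rewrite /Defs.phi (big_setID (A := setT) X) setTI setTD /= addrC addrK. Qed.

Definition potential (S : {set T}) : R := phi S * phi (~: S).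

Lemma potential_ge0 (S : {set T}) : 0 <= potential S.
Proof. exact: mulr_ge0 (phi_ge0 _) (phi_ge0 _). Qed.

Lemma potential_absorbing (S : {set T}) : absorbing S -> potential S = 0.
Proof.
have phi0 : phi set0 = 0 by rewrite /Defs.phi big_set0.
by case/orP => /eqP ->; rewrite /potential ?setCT phi0 ?mul0r ?mulr0.
Qed.

Definition jump (S : {set T}) (x y : T) : R :=
  ((x \in S)%:R - (y \in S)%:R) * w y.

Lemma phi_next (S : {set T}) (x y : T) :
  phi (moran_next S x y) = phi S + jump S x y.
Proof.
rewrite !phi_indicator.
have -> : \sum_z (z \in moran_next S x y)%:R * w z =
          \sum_z ((z \in S)%:R * w z + (z == y)%:R * jump S x y).
  apply: eq_bigr => z _; rewrite /moran_next /jump.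
  case: (eqVneq z y) => [->|nzy].
    by case: (x \in S); rewrite ?in_setU1 ?in_setD1 eqxx /=;
       case: (y \in S); rewrite /=; ring.
  by case: (x \in S); rewrite ?in_setU1 ?in_setD1 (negbTE nzy) /=; ring.
rewrite big_split /=; congr (_ + _).
by rewrite (bigD1 y) //= eqxx mul1r big1 ?addr0 // => z /negbTE ->; rewrite mul0r.
Qed.

Lemma potential_next (S : {set T}) (x y : T) :
  potential (moran_next S x y) =
  potential S + (Phi - 2 * phi S) * jump S x y - jump S x y ^+ 2.
Proof. by rewrite /potential !phi_setC phi_next; ring. Qed.

Lemma fitness_neutral (S : {set T}) : fitness 1 S = n.
Proof. by rewrite /fitness mul1r -natrD cardsC. Qed.

(* with r = 1, x is chosen with probability 1/n and y with probability w x *)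
Lemma neutral_step_average (S : {set T}) (g : {set T} -> R) :
  \sum_S' moran_trans e 1 S S' * g S' =
  \sum_x \sum_(y | e x y) (n^-1 * w x) * g (moran_next S x y).
Proof.
rewrite /moran_trans.
under eq_bigr => S' _ do rewrite big_distrl /=.
rewrite exchange_big; apply: eq_bigr => x _.
under eq_bigr => S' _ do rewrite big_distrl /=.
rewrite exchange_big; apply: eq_bigr => y _ /=.
rewrite (bigD1 (moran_next S x y)) //= eqxx mulr1 big1 ?addr0.
  by rewrite fitness_neutral if_same div1r.
by move=> S' /negbTE; rewrite eq_sym => ->; rewrite mulr0 mul0r.
Qed.

Lemma moran_trans_neutral_ge0 (S S' : {set T}) : 0 <= moran_trans e (1 : R) S S'.
Proof.
apply: sumr_ge0 => x _; apply: sumr_ge0 => y _.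
by rewrite fitness_neutral if_same !mulr_ge0 ?invr_ge0 ?ler0n.
Qed.

Lemma step_weights_le1 : \sum_x \sum_(y | e x y) n^-1 * w x <= 1.
Proof.
have out_le x : \sum_(y | e x y) n^-1 * w x <= n^-1.
  have -> : \sum_(y | e x y) n^-1 * w x = \sum_(y in [set y | e x y]) n^-1 * w x.
    by apply: eq_bigl => y; rewrite inE.
  rewrite sumr_const -/(deg e x) -[_ *+ deg e x]mulr_natr -mulrA.
  have [->|nz] := eqVneq (deg e x) 0%N; first by rewrite invr0 mul0r mulr0 invr_ge0.
  by rewrite mulVf ?mulr1 // pnatr_eq0.
apply: le_trans (ler_sum _ (fun x _ => out_le x)) _.
rewrite sumr_const; change (n^-1 *+ #|T| <= 1); rewrite -[n^-1 *+ _]mulr_natr.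
have [n0|n_neq0] := eqVneq n 0; first by rewrite n0 mulr0 ler01.
by rewrite mulVf.
Qed.

(* a vertex with a neighbour has degree in [1, n] *)
Lemma inv_card_le_weight (x y : T) : e x y -> n^-1 <= w x.
Proof.
move=> exy.
have deg_gt0 : (0 < deg e x)%N by apply/card_gt0P; exists y; rewrite inE.
have deg_le_n : (deg e x <= #|T|)%N := max_card _.
rewrite lef_pV2 ?posrE ?ltr0n ?ler_nat //; exact: leq_trans deg_gt0 deg_le_n.
Qed.

Lemma weight_ge0 (x : T) : 0 <= w x.
Proof. by rewrite invr_ge0 ler0n. Qed.

Hypothesis e_sym : symmetric e.
Hypothesis e_conn : forall x y : T, connect e x y.

Lemma antisymmetric_edge_sum (F : T -> T -> R) :
  (forall x y, F y x = - F x y) -> \sum_x \sum_(y | e x y) F x y = 0.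
Proof.
move=> F_anti; set D := (X in X = 0).
suff : D = - D by lra.
rewrite /D; under eq_bigr => x _ do rewrite big_mkcond.
rewrite [LHS]exchange_big -sumrN; apply: eq_bigr => y _; rewrite -sumrN.
apply: eq_bigr => x _; rewrite /= (e_sym x y).
by case: (e y x); rewrite ?oppr0 // F_anti.
Qed.

Lemma boundary_edge (S : {set T}) : ~~ absorbing S ->
  exists x y, [/\ e x y, x \in S & y \notin S].
Proof.
rewrite /absorbing negb_or => /andP [S_neq0 S_neqT].
have [x0 x0S] := set0Pn _ S_neq0.
have /properP [_ [y0 _ y0S]] : S \proper setT by rewrite properT.
have [/existsP [x /existsP [y /and3P [exy xS yS]]] | no_edge] :=
  boolP [exists x, exists y, [&& e x y, x \in S & y \notin S]].
  by exists x, y.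
have S_closed : closed e (mem S).
  apply: intro_closed; first exact: sym_connect_sym.
  move=> x y exy xS; apply/negPn/negP => yS; move/negP: no_edge; apply.
  by apply/existsP; exists x; apply/existsP; exists y; rewrite exy xS yS.
by have := closed_connect S_closed (e_conn x0 y0); rewrite x0S (negbTE y0S).
Qed.

(* both endpoints of an edge have weight at least 1/n, so the quadratic
   contribution of an edge is at least n^-4 *)
Lemma boundary_edge_weight (x y : T) : e x y -> n^-1 ^+ 4 <= n^-1 * w x * w y ^+ 2.
Proof.
move=> exy.
have n_ge0 : 0 <= n^-1 by rewrite invr_ge0 ler0n.
have n_wx : n^-1 <= w x := inv_card_le_weight exy.
have n_wy : n^-1 <= w y by apply: (@inv_card_le_weight y x); rewrite e_sym.
have -> : n^-1 ^+ 4 = n^-1 * n^-1 * (n^-1 * n^-1) by ring.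
by rewrite expr2; apply: ler_pM; rewrite ?mulr_ge0 //; apply: ler_pM.
Qed.

Lemma potential_drift (S : {set T}) : ~~ absorbing S ->
  \sum_x \sum_(y | e x y) (n^-1 * w x) * potential (moran_next S x y)
    <= potential S - n^-1 ^+ 4.
Proof.
move=> S_nabs.
pose C := \sum_x \sum_(y | e x y) n^-1 * w x.
pose D := \sum_x \sum_(y | e x y) (n^-1 * w x) * jump S x y.
pose E := \sum_x \sum_(y | e x y) (n^-1 * w x) * jump S x y ^+ 2.
set slope := Phi - 2 * phi S.
have -> : \sum_x \sum_(y | e x y) (n^-1 * w x) * potential (moran_next S x y)
          = potential S * C + slope * D - E.
  rewrite /C /D /E !mulr_sumr -big_split -sumrB; apply: eq_bigr => x _.
  rewrite !mulr_sumr -big_split -sumrB; apply: eq_bigr => y _.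
  by rewrite potential_next -/slope /=; ring.
have D0 : D = 0 by apply: antisymmetric_edge_sum => x y; rewrite /jump; ring.
have C_le1 : C <= 1 := step_weights_le1.
have E_ge : n^-1 ^+ 4 <= E.
  have [x0 [y0 [exy x0S y0S]]] := boundary_edge S_nabs.
  have jump0 : jump S x0 y0 = w y0 by rewrite /jump x0S (negbTE y0S) subr0 mul1r.
  have term_ge0 x y : 0 <= (n^-1 * w x) * jump S x y ^+ 2.
    by rewrite mulr_ge0 ?sqr_ge0 // mulr_ge0 ?weight_ge0 // invr_ge0 ler0n.
  apply: le_trans (boundary_edge_weight exy) _.
  rewrite /E (bigD1 x0) //= (bigD1 y0 exy) /= jump0 -addrA lerDl.
  by rewrite addr_ge0 ?sumr_ge0 // => x _; apply: sumr_ge0.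
by rewrite D0 mulr0 addr0 lerB // ler_piMr ?potential_ge0.
Qed.

(* step 3: H_t = E[h(X_t); tau > t], the expected potential of the
   trajectories not absorbed by time t *)
Definition mean_potential (t : nat) : R :=
  \sum_S surv_dist e 1 t S * potential S.

Lemma surv_dist_ge0 (t : nat) (S : {set T}) : 0 <= surv_dist e (1 : R) t S.
Proof.
elim: t S => [|t IH] S /=; case: (absorbing S) => //.
  by apply: sumr_ge0 => x _; rewrite mulr_ge0 ?invr_ge0 ?ler0n.
by apply: sumr_ge0 => S' _; rewrite mulr_ge0 ?moran_trans_neutral_ge0.
Qed.

Lemma mean_potential_ge0 (t : nat) : 0 <= mean_potential t.
Proof. by apply: sumr_ge0 => S _; rewrite mulr_ge0 ?surv_dist_ge0 ?potential_ge0. Qed.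

Lemma mean_potential_step (t : nat) :
  mean_potential t.+1 <= mean_potential t - n^-1 ^+ 4 * prob_not_absorbed e 1 t.
Proof.
have -> : mean_potential t.+1 =
    \sum_S' (\sum_S surv_dist e 1 t S * moran_trans e 1 S S') * potential S'.
  rewrite /mean_potential; apply: eq_bigr => S' _ /=.
  by case: (boolP (absorbing S')) => [abs|_]; rewrite ?(potential_absorbing abs) ?mulr0.
under eq_bigr => S' _ do rewrite big_distrl.
rewrite exchange_big /=.
under eq_bigr => S _ do
  (under eq_bigr => S' _ do rewrite -mulrA; rewrite -mulr_sumr neutral_step_average).
rewrite /prob_not_absorbed mulr_sumr -sumrB; apply: ler_sum => S _.
case: (boolP (absorbing S)) => [abs|S_nabs].
  have -> : surv_dist e (1 : R) t S = 0 by case: t => [|t] /=; rewrite abs.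
  by rewrite !mul0r mulr0 subr0.
apply: le_trans (ler_wpM2l (surv_dist_ge0 t S) (potential_drift S_nabs)) _.
by rewrite mulrBr [_ * surv_dist _ _ _ _]mulrC.
Qed.

Lemma mean_potential0 : mean_potential 0 = n^-1 * Phi ^+ 2 - phi0' R e.
Proof.
have -> : mean_potential 0 = \sum_S init_dist R S * potential S.
  rewrite /mean_potential; apply: eq_bigr => S _ /=.
  by case: (boolP (absorbing S)) => [abs|_]; rewrite ?(potential_absorbing abs) ?mulr0.
have -> : \sum_S init_dist R S * potential S = n^-1 * \sum_x w x * (Phi - w x).
  rewrite /init_dist; under eq_bigr => S _ do rewrite big_distrl.
  rewrite exchange_big mulr_sumr; apply: eq_bigr => x _ /=.
  rewrite (bigD1 [set x]) //= eqxx big1 ?addr0 => [|S /negbTE ->]; last by rewrite mulr0 mul0r.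
  by rewrite mulr1 /potential phi_setC /Defs.phi big_set1.
rewrite /phi0' -mulrBr; congr (_ * _).
have PhiE : Phi = \sum_x w x by rewrite /Defs.phi; apply: eq_bigl => x; rewrite inE.
rewrite expr2 [X in _ = X * _ - _]PhiE big_distrl -sumrB /=; apply: eq_bigr => x _.
by rewrite -exprVn; ring.
Qed.

End NeutralMoran.

Theorem theorem9 (R : realFieldType) (T : finType) (e : rel T)
    (e_sym : symmetric e) (e_irr : irreflexive e)
    (e_conn : forall x y : T, connect e x y)
    (n_ge2 : (2 <= #|T|)%N) :
  expected_absorption_le e 1
    (#|T|%:R ^+ 4 * (phi R e setT ^+ 2 - phi0' R e)).
Proof.
move=> N; set n : R := #|T|%:R; set P := phi R e setT; set Q := phi0' R e.
have n_ge1 : 1 <= n by rewrite ler1n (leq_trans _ n_ge2).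
have n_gt0 : 0 < n := lt_le_trans ltr01 n_ge1.
have decay := telescoping_bound (@mean_potential_step R T e e_sym e_conn)
                                (@mean_potential_ge0 R T e N).
rewrite mean_potential0 -/n -/P -/Q in decay.
(* telescoping yields n^4 (Phi^2 / n - phi'_0), and Phi^2 / n <= Phi^2 *)
apply: (@le_trans _ _ (n ^+ 4 * (n^-1 * P ^+ 2 - Q))).
  by rewrite -ler_pdivrMl ?exprn_gt0 // -exprVn.
apply: ler_wpM2l; first by rewrite exprn_ge0 ?ltW.
apply: lerB => //.
by rewrite ler_piMl ?sqr_ge0 // invf_le1.
Qed.
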